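(* For every $n\ge0$, the row sequence $\big(C_{n,k}^{(3)}\big)_{0\le k\le 3n}$ of the three-Catalan triangle is log-concave, where $C_{n,k}^{(3)}=\binom{2n}{3n+k}_3-\binom{2n}{3n+k+1}_3$.
   Context: The quadrinomial coefficients $\binom{n}{k}_3$ are defined by $(1+x+x^2+x^3)^n=\sum_{k\in\mathbb Z}\binom{n}{k}_3x^k$, with $\binom{n}{k}_3=0$ for $k<0$ or $k>3n$. A sequence of nonnegative numbers $(a_k)_{0\le k\le m}$ is log-concave if $a_{k-1}a_{k+1}\le a_k^2$ for all $0<k<m$. *)

From mathcomp Require Import all_boot all_order all_algebra.
Set Implicit Arguments. Unset Strict Implicit. Unset Printing Implicit Defensive.
Import Order.TTheory GRing.Theory Num.Theory.
Local Open Scope ring_scope.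

(* Quadrinomial coefficient binom(n,k)_3: coefficient of x^k in (1+x+x^2+x^3)^n.
   For k > 3n the coefficient is 0 (k < 0 does not arise since k : nat). *)
Definition quadrinomial (n k : nat) : int :=
  ((1 + 'X + 'X^2 + 'X^3 : {poly int}) ^+ n)`_k.

Definition three_catalan (n k : nat) : int :=
  quadrinomial (2 * n) (3 * n + k) - quadrinomial (2 * n) (3 * n + k + 1).

Definition log_concave (a : nat -> int) (m : nat) : Prop :=
  (forall k : nat, (k <= m)%N -> 0 <= a k) /\
  (forall k : nat, (0 < k)%N -> (k < m)%N -> a k.-1 * a k.+1 <= a k ^+ 2).

From mathcomp Require Import all_boot all_order all_algebra zify ring lra.
Set Implicit Arguments. Unset Strict Implicit. Unset Printing Implicit Defensive.
Import Order.TTheory GRing.Theory Num.Theory.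
Local Open Scope ring_scope.

(* Let d_n(m) be the difference of consecutive quadrinomial coefficients
   binom(n,m)_3 - binom(n,m+1)_3, so that C_{n,k} = d_{2n}(3n+k).  From
   (1+x+x^2+x^3)^{n+1} = (1+x+x^2+x^3)^n (1+x+x^2+x^3), d_{n+1} is the sum of
   four consecutive shifts of d_n, and the symmetry of the coefficients gives
   d_n(3n-1-m) = -d_n(m).  Let h_n be d_n restricted to the upper half 2m >= 3n
   (and 0 below it); then d_n = h_n - h_n(3n-1-.).  Consequently h_{n+1} agrees
   with the four-term window sum of h_n for 2m >= 3n+5, vanishes for
   2m < 3n+3, and lies between 0 and that window sum at the two points in
   between.  Window sums preserve the condition v(a-1)v(b+1) <= v(a)v(b) for
   a <= b, and so does cutting off an initial segment in this way, so by
   induction every h_n is nonnegative and satisfies it; a = b is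
   log-concavity. *)

Section PF2.
Variable R : realDomainType.
Implicit Types v : int -> R.

(* The 2 x 2 minors of the Toeplitz matrix (v (i - j)) are nonnegative (with no
   sign condition on v itself). *)
Definition pf2 v := forall a b : int, a <= b -> v (a - 1) * v (b + 1) <= v a * v b.

Definition window4 v (m : int) : R := v m + v (m - 1) + v (m - 2) + v (m - 3).

Lemma pf2_shift v (p : nat) (x y : int) : pf2 v -> x + p%:Z <= y - p%:Z ->
  v x * v y <= v (x + p%:Z) * v (y - p%:Z).
Proof.
move=> pf2v; elim: p x y => [|p IHp] x y hxy; first by rewrite addr0 subr0.
have := pf2v (x + 1) (y - 1) ltac:(lia); rewrite addrK subrK => /le_trans; apply.
have -> : x + p.+1%:Z = x + 1 + p%:Z by lia.
have -> : y - p.+1%:Z = y - 1 - p%:Z by lia.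
by apply: IHp; lia.
Qed.

Lemma pf2_spread v (x a b y : int) : pf2 v ->
  x <= a <= y -> x <= b <= y -> a + b = x + y -> v x * v y <= v a * v b.
Proof.
move=> pf2v; wlog leab : a b / a <= b => [wlog_ab|] hxa hxb habxy.
  have [leab|ltba] := leP a b; first exact: wlog_ab.
  by rewrite [v a * _]mulrC wlog_ab //; lia.
have [p ea] : exists p : nat, a = x + p%:Z by exists `|a - x|%N; lia.
have eb : b = y - p%:Z by lia.
by rewrite ea eb; apply: pf2_shift => //; lia.
Qed.

Lemma pf2_window4 v : pf2 v -> pf2 (window4 v).
Proof.
move=> pf2v a b leab.
have spread x c d y : x <= c <= y -> x <= d <= y -> c + d = x + y ->
  v x * v y <= v c * v d by move=> *; exact: pf2_spread.
rewrite /window4.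
have -> : a - 1 - 1 = a - 2 by lia.
have -> : a - 1 - 2 = a - 3 by lia.
have -> : a - 1 - 3 = a - 4 by lia.
have -> : b + 1 - 1 = b by lia.
have -> : b + 1 - 2 = b - 1 by lia.
have -> : b + 1 - 3 = b - 2 by lia.
(* Expanding both products, the terms not common to both sides pair off into
   the following seven inequalities. *)
have h1 := spread (a - 1) a b (b + 1) ltac:(lia) ltac:(lia) ltac:(lia).
have h2 := spread (a - 2) a (b - 1) (b + 1) ltac:(lia) ltac:(lia) ltac:(lia).
have h3 := spread (a - 3) a (b - 2) (b + 1) ltac:(lia) ltac:(lia) ltac:(lia).
have h4 := spread (a - 4) a (b - 3) (b + 1) ltac:(lia) ltac:(lia) ltac:(lia).
have h5 := spread (a - 4) (a - 1) (b - 3) b ltac:(lia) ltac:(lia) ltac:(lia).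
have h6 := spread (a - 4) (a - 2) (b - 3) (b - 1) ltac:(lia) ltac:(lia) ltac:(lia).
have h7 := spread (a - 4) (a - 3) (b - 3) (b - 2) ltac:(lia) ltac:(lia) ltac:(lia).
lra.
Qed.

Lemma pf2_truncate u v : pf2 v -> (forall m, 0 <= u m <= v m) ->
  (forall m m', m < m' -> u m != 0 -> u m' = v m') -> pf2 u.
Proof.
move=> pf2v bound_uv u_eq_v a b leab.
have u_ge0 m : 0 <= u m by case/andP: (bound_uv m).
have [->|nz] := eqVneq (u (a - 1)) 0; first by rewrite mul0r mulr_ge0.
rewrite (u_eq_v (a - 1) a) ?(u_eq_v (a - 1) b) //; try lia.
apply: le_trans (pf2v _ _ leab).
have /andP[_ le_u_v1] := bound_uv (a - 1).
have /andP[_ le_u_v2] := bound_uv (b + 1).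
exact: ler_pM.
Qed.

Lemma pf2_delta0 : pf2 (fun m => (m == 0)%:R).
Proof.
move=> a b leab /=; have [a1|a1] := eqVneq (a - 1) 0; last first.
  by rewrite mul0r mulr_ge0.
have /negbTE -> : b + 1 != 0 by apply/eqP; lia.
by rewrite mulr0 mulr_ge0.
Qed.

End PF2.

Definition quadz (n : nat) (j : int) : int :=
  if j < 0 then 0 else quadrinomial n `|j|%N.

Lemma quadz_nat n (k : nat) : quadz n k = quadrinomial n k.
Proof. by []. Qed.

Lemma quadz_neg n j : j < 0 -> quadz n j = 0.
Proof. by rewrite /quadz => ->. Qed.

Lemma quadz_subn n (k i : nat) :
  quadz n (k%:Z - i%:Z) = if (k < i)%N then 0 else quadrinomial n (k - i).
Proof.
case: ltnP => [ltki|leik]; first by apply: quadz_neg; lia.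
by have -> : k%:Z - i%:Z = (k - i)%N by lia.
Qed.

Lemma quadz0 j : quadz 0 j = (j == 0)%:R.
Proof.
case: (ltP j 0) => [jlt0|jge0]; first by rewrite quadz_neg //; case: eqP => // ?; lia.
have [k ->] : exists k : nat, j = k by exists `|j|%N; lia.
by rewrite quadz_nat /quadrinomial expr0 coefC; case: k.
Qed.

Lemma quadzS n j : quadz n.+1 j = window4 (quadz n) j.
Proof.
case: (ltP j 0) => [jlt0|jge0]; first by rewrite /window4 !quadz_neg //; lia.
have [k ->] : exists k : nat, j = k by exists `|j|%N; lia.
rewrite /window4 quadz_nat /quadrinomial exprSr !mulrDr mulr1 !coefD -(expr1 'X) !coefMXn.
by rewrite -[_ - 1]/(k%:Z - 1%:Z) -[_ - 2]/(k%:Z - 2%:Z) -[_ - 3]/(k%:Z - 3%:Z) !quadz_subn.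
Qed.

Lemma quadz_sym n j : quadz n (3 * n%:Z - j) = quadz n j.
Proof.
elim: n j => [|n IHn] j; first by rewrite !quadz0 mulr0 sub0r oppr_eq0.
rewrite !quadzS /window4.
have -> : 3 * n.+1%:Z - j - 1 = 3 * n%:Z - (j - 2) by lia.
have -> : 3 * n.+1%:Z - j - 2 = 3 * n%:Z - (j - 1) by lia.
have -> : 3 * n.+1%:Z - j - 3 = 3 * n%:Z - j by lia.
have -> : 3 * n.+1%:Z - j = 3 * n%:Z - (j - 3) by lia.
by rewrite !IHn; ring.
Qed.

Definition qdiff n m := quadz n m - quadz n (m + 1).

Lemma qdiffS n m : qdiff n.+1 m = window4 (qdiff n) m.
Proof.
rewrite /qdiff /window4 !quadzS /window4.
have -> : m + 1 - 1 = m by lia.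
have -> : m + 1 - 2 = m - 1 by lia.
have -> : m + 1 - 3 = m - 2 by lia.
have -> : m - 1 + 1 = m by lia.
have -> : m - 2 + 1 = m - 1 by lia.
have -> : m - 3 + 1 = m - 2 by lia.
lia.
Qed.

Lemma qdiff_anti n m : qdiff n (3 * n%:Z - 1 - m) = - qdiff n m.
Proof.
rewrite /qdiff -opprB.
have -> : 3 * n%:Z - 1 - m = 3 * n%:Z - (m + 1) by lia.
have -> : 3 * n%:Z - (m + 1) + 1 = 3 * n%:Z - m by lia.
by rewrite !quadz_sym.
Qed.

Definition qdiff_half n m := if 3 * n%:Z <= 2 * m then qdiff n m else 0.

Lemma qdiff_half_lt n m : 2 * m < 3 * n%:Z -> qdiff_half n m = 0.
Proof. by rewrite /qdiff_half ltNge => /negbTE ->. Qed.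

Lemma qdiff_half_ge n m : 3 * n%:Z <= 2 * m -> qdiff_half n m = qdiff n m.
Proof. by rewrite /qdiff_half => ->. Qed.

Lemma qdiff_reflect n m :
  qdiff n m = qdiff_half n m - qdiff_half n (3 * n%:Z - 1 - m).
Proof.
case: (leP (3 * n%:Z) (2 * m)) => hm.
  by rewrite qdiff_half_ge // [qdiff_half n _]qdiff_half_lt ?subr0 //; lia.
rewrite [qdiff_half n m]qdiff_half_lt // sub0r.
have [hm'|hm'] := eqVneq (2 * m) (3 * n%:Z - 1).
  have := qdiff_anti n m; have -> : 3 * n%:Z - 1 - m = m by lia.
  by rewrite qdiff_half_lt; lia.
by rewrite qdiff_half_ge ?qdiff_anti ?opprK //; lia.
Qed.

Lemma qdiff_halfS n m : 3 * n%:Z + 3 <= 2 * m ->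
  qdiff_half n.+1 m = window4 (qdiff_half n) m - qdiff_half n (3 * n%:Z + 2 - m).
Proof.
move=> hm; rewrite qdiff_half_ge; last by lia.
rewrite qdiffS /window4 !qdiff_reflect.
rewrite [qdiff_half n (_ - 1 - m)]qdiff_half_lt; last by lia.
rewrite [qdiff_half n (_ - 1 - (m - 1))]qdiff_half_lt; last by lia.
rewrite [qdiff_half n (_ - 1 - (m - 2))]qdiff_half_lt; last by lia.
have -> : 3 * n%:Z - 1 - (m - 3) = 3 * n%:Z + 2 - m by lia.
ring.
Qed.

Lemma qdiff_half_window n m : 3 * n%:Z + 5 <= 2 * m ->
  qdiff_half n.+1 m = window4 (qdiff_half n) m.
Proof.
by move=> hm; rewrite qdiff_halfS 1?[qdiff_half n _]qdiff_half_lt ?subr0 //; lia.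
Qed.

Lemma qdiff_half_bounds n m : (forall j, 0 <= qdiff_half n j) ->
  0 <= qdiff_half n.+1 m <= window4 (qdiff_half n) m.
Proof.
move=> ge0; move: (ge0 m) (ge0 (m - 1)) (ge0 (m - 2)) (ge0 (m - 3)).
rewrite /window4; case: (ltP (2 * m) (3 * n.+1%:Z)) => hm.
  by rewrite (qdiff_half_lt hm); lra.
rewrite qdiff_halfS /window4; last by lia.
have [->|[->|->]] : qdiff_half n (3 * n%:Z + 2 - m) = 0 \/
    qdiff_half n (3 * n%:Z + 2 - m) = qdiff_half n (m - 1) \/
    qdiff_half n (3 * n%:Z + 2 - m) = qdiff_half n (m - 2); try lra.
have [hm5|hm5] := ltP (2 * m) (3 * n%:Z + 5); last by left; apply: qdiff_half_lt; lia.
right; have [hm3|hm3] := eqVneq (2 * m) (3 * n%:Z + 3).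
  by left; congr qdiff_half; lia.
by right; congr qdiff_half; lia.
Qed.

Lemma qdiff_half0 m : qdiff_half 0 m = (m == 0)%:R.
Proof.
rewrite /qdiff_half /qdiff !quadz0 mulr0; case: ifP => [hm|/negbT hm].
  have /negbTE -> : m + 1 != 0 by apply/eqP; lia.
  by rewrite subr0.
by have /negbTE -> : m != 0 by apply/eqP; lia.
Qed.

Lemma qdiff_half_pf2 n : (forall m, 0 <= qdiff_half n m) /\ pf2 (qdiff_half n).
Proof.
elim: n => [|n [ge0 pf2n]].
  split=> [m|a b leab]; first by rewrite qdiff_half0 ler0n.
  by rewrite !qdiff_half0; exact: (@pf2_delta0 int _ _ leab).
have bounds m := qdiff_half_bounds m ge0.
split=> [m|]; first by case/andP: (bounds m).
apply: pf2_truncate (pf2_window4 pf2n) bounds _ => m m' ltmm' nz.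
apply: qdiff_half_window.
have : 3 * n.+1%:Z <= 2 * m by rewrite leNgt; apply: contra nz => /qdiff_half_lt ->.
lia.
Qed.

Theorem proposition4p2 (n : nat) :
  log_concave (three_catalan n) (3 * n).
Proof.
have catalanE k : three_catalan n k = qdiff_half (2 * n) (3 * n + k)%N.
  rewrite qdiff_half_ge; last by lia.
  rewrite /qdiff /three_catalan -!quadz_nat.
  by have -> : (3 * n + k)%N%:Z + 1 = (3 * n + k + 1)%N by lia.
have [ge0 pf2c] := qdiff_half_pf2 (2 * n).
split=> [k _|k k_gt0 _]; first by rewrite catalanE.
have := pf2c _ _ (lexx (3 * n + k)%N%:Z).
have -> : (3 * n + k)%N%:Z - 1 = (3 * n + k.-1)%N by lia.
have -> : (3 * n + k)%N%:Z + 1 = (3 * n + k.+1)%N by lia.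
by rewrite !catalanE expr2.
Qed.
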